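(* Let $f_{N_2N_1}(x)=\left(\frac{\sqrt x+1}{2}\right)\sqrt{\frac{x+1}{2}}-\left(\frac{\sqrt x+1}{2}\right)^2$ for $x\in(0,\infty)$, let $f_{N_2N_1}^*(u)=u\,f_{N_2N_1}\!\left(\frac{1-u}{u}\right)$ for $u\in(0,1)$, extended by continuity to $[0,1]$ (explicitly $f_{N_2N_1}^*(u)=\frac{\sqrt2}{4}\left(\sqrt u+\sqrt{1-u}\right)-\frac14\left(1+2\sqrt{u(1-u)}\right)$), and define $\overline M_{N_2N_1}(C_1,C_2)=E_X\{f_{N_2N_1}^*(P(C_2\mid x))\}$. Then $$P_e\le \frac12\left[1-\frac{4}{2\sqrt2-1}\,\overline M_{N_2N_1}(C_1,C_2)\right].$$
   Context: Two-class decision problem: classes $C_1,C_2$, an observation $x$ in a space $\mathrm X$ with density $p(x)$, and a posteriori probabilities $P(C_1\mid x),P(C_2\mid x)\ge0$ with $P(C_1\mid x)+P(C_2\mid x)=1$. $E_X\{g(x)\}=\int_{\mathrm X} g(x)p(x)\,dx$. $P_e=E_X\{\min(P(C_1\mid x),P(C_2\mid x))\}$ is the Bayesian probability of error. *)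

From mathcomp Require Import all_boot all_order all_algebra.
From mathcomp Require Import all_classical all_reals all_analysis.
Set Implicit Arguments. Unset Strict Implicit. Unset Printing Implicit Defensive.
Import Order.TTheory GRing.Theory Num.Theory.
Local Open Scope ring_scope.

Definition fN2N1 {R : realType} (x : R) : R :=
  ((Num.sqrt x + 1) / 2) * Num.sqrt ((x + 1) / 2) - ((Num.sqrt x + 1) / 2) ^+ 2.

(* f*(u) = u f((1-u)/u) on (0,1); elsewhere (in particular at the endpoints
   0 and 1) the explicit formula, i.e. the extension by continuity. *)
Definition fstarN2N1 {R : realType} (u : R) : R :=
  if (0 < u) && (u < 1) then u * fN2N1 ((1 - u) / u)
  else Num.sqrt 2 / 4 * (Num.sqrt u + Num.sqrt (1 - u))
       - 1 / 4 * (1 + 2 * Num.sqrt (u * (1 - u))).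

From mathcomp Require Import all_boot all_order all_algebra.
From mathcomp Require Import all_classical all_reals all_analysis.
From mathcomp Require Import ring lra.
From mathcomp Require Import measurable_realfun.
Import Order.TTheory GRing.Theory Num.Theory.
Local Open Scope ring_scope.
Local Open Scope classical_set_scope.

(* With s = sqrt u and t = sqrt (1 - u), so that s^2 + t^2 = 1 and w = s + t,
   one has f*(u) = (sqrt 2 w - w^2) / 4.  For s <= t, min(u, 1 - u) = s^2 and
   1 - 2 s^2 = (t - s) w, so the pointwise bound
   min(u, 1 - u) <= 1/2 (1 - 4 / (2 sqrt 2 - 1) f*(u)) reduces to
   w (2 sqrt 2 (t - s) + 2 s - sqrt 2) >= 0, which holds on the quarter circle.
   Multiplying by p(x) and integrating against mu, with E_X{1} = 1, gives the
   theorem. *)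

Section fstar_sqrt.
Context {R : realType}.
Local Notation q := (Num.sqrt (2 : R)).

Definition fstar_sqrt (s t : R) : R := q / 4 * (s + t) - (s + t) ^+ 2 / 4.

Lemma sqr_sqrt2 : q ^+ 2 = 2.
Proof. by rewrite sqr_sqrtr. Qed.

Lemma sqrt2_gt1 : 1 < q.
Proof. by rewrite -[X in X < _](sqrtr1 R) ltr_sqrt ?ltr1n. Qed.

Lemma fstarN2N1_sqrt {u : R} : 0 <= u <= 1 ->
  fstarN2N1 u = fstar_sqrt (Num.sqrt u) (Num.sqrt (1 - u)).
Proof.
move=> /andP[u_ge0 u_le1]; rewrite /fstarN2N1 /fN2N1 /fstar_sqrt.
set s := Num.sqrt u; set t := Num.sqrt (1 - u).
have s2 : s ^+ 2 = u by rewrite sqr_sqrtr.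
have t2 : t ^+ 2 = 1 - u by rewrite sqr_sqrtr // subr_ge0.
have -> : Num.sqrt (u * (1 - u)) = s * t by rewrite sqrtrM.
have sqr_sum : 1 + 2 * (s * t) = (s + t) ^+ 2 by rewrite sqrrD s2 t2; ring.
case: ifP => [/andP[u_gt0 u_lt1]|_]; last by rewrite sqr_sum; field.
have s_gt0 : 0 < s by rewrite sqrtr_gt0.
have -> : Num.sqrt ((1 - u) / u) = t / s.
  by rewrite sqrtrM ?subr_ge0 // sqrtrV ?ltW.
have -> : Num.sqrt (((1 - u) / u + 1) / 2) = (q * s)^-1.
  rewrite -[RHS]ger0_norm ?invr_ge0 ?mulr_ge0 ?sqrtr_ge0 ?ltW // -sqrtr_sqr.
  congr Num.sqrt; rewrite exprVn exprMn sqr_sqrt2 s2; field; lra.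
have q_neq0 : q != 0 by rewrite gt_eqF // (lt_trans ltr01 sqrt2_gt1).
rewrite invfM.
have -> : q^-1 = q / 2.
  by apply: (mulfI q_neq0); rewrite divff // mulrA -expr2 sqr_sqrt2 divff.
rewrite -{1}s2; field; exact: lt0r_neq0.
Qed.

Lemma sqrt2_le_sqrt_affine {s t : R} : 0 <= s -> s <= t -> s ^+ 2 + t ^+ 2 = 1 ->
  q <= 2 * q * (t - s) + 2 * s.
Proof.
move=> s_ge0 s_le_t st1.
have q_gt1 := sqrt2_gt1; have q2 := sqr_sqrt2.
have t_le1 : t <= 1 by nra.
(* multiplying by [q + 2 s > 0] turns the claim into [0 <= (t - s)(2 + 2 q s - t - s)] *)
have factor : (2 * q * (t - s) + 2 * s - q) * (q + 2 * s) =
    2 * ((t - s) * (2 + 2 * q * s - t - s)) + (q ^+ 2 - 2) * (2 * (t - s) - 1)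
    + 2 * (s ^+ 2 + t ^+ 2 - 1) by ring.
rewrite q2 st1 !subrr mul0r mulr0 !addr0 in factor.
have : 0 <= (2 * q * (t - s) + 2 * s - q) * (q + 2 * s).
  by rewrite factor; apply: mulr_ge0 => //; apply: mulr_ge0; nra.
rewrite pmulr_lge0 ?subr_ge0 //; lra.
Qed.

Lemma sqr_le_fstar_sqrt {s t : R} : 0 <= s -> s <= t -> s ^+ 2 + t ^+ 2 = 1 ->
  s ^+ 2 <= 1 / 2 * (1 - 4 / (2 * q - 1) * fstar_sqrt s t).
Proof.
move=> s_ge0 s_le_t st1.
have q_gt1 := sqrt2_gt1.
rewrite -subr_ge0 /fstar_sqrt.
have -> : 1 / 2 * (1 - 4 / (2 * q - 1) * (q / 4 * (s + t) - (s + t) ^+ 2 / 4))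
    - s ^+ 2 = (s + t) * (2 * q * (t - s) + 2 * s - q) / (2 * (2 * q - 1))
    + (1 - (s ^+ 2 + t ^+ 2)) / 2.
  by field; lra.
rewrite st1 subrr mul0r addr0 divr_ge0 ?mulr_ge0 ?subr_ge0 ?sqrt2_le_sqrt_affine //.
all: lra.
Qed.

Lemma fstar_sqrtC (s t : R) : fstar_sqrt s t = fstar_sqrt t s.
Proof. by rewrite /fstar_sqrt [s + t]addrC. Qed.

Lemma sqr_sqrt_add_sqr_sqrt_subr {u : R} : 0 <= u <= 1 ->
  Num.sqrt u ^+ 2 + Num.sqrt (1 - u) ^+ 2 = 1.
Proof.
by move=> /andP[u_ge0 u_le1]; rewrite !sqr_sqrtr ?subr_ge0 // addrC subrK.
Qed.

Lemma normr_fstar_sqrt_le1 {s t : R} : 0 <= s -> 0 <= t -> s ^+ 2 + t ^+ 2 = 1 ->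
  `|fstar_sqrt s t| <= 1.
Proof.
move=> s_ge0 t_ge0 st1.
have s_le1 : s <= 1 by nra.
have t_le1 : t <= 1 by nra.
have q_gt1 := sqrt2_gt1; have q_le2 : q <= 2 by have := sqr_sqrt2; nra.
have qw_le4 : q * (s + t) <= 4 by nra.
have w2_le4 : (s + t) ^+ 2 <= 4 by nra.
rewrite /fstar_sqrt ler_norml; apply/andP; split; nra.
Qed.

Lemma minr_le_fstarN2N1_bound {u : R} : 0 <= u <= 1 ->
  Num.min (1 - u) u <= 1 / 2 * (1 - 4 / (2 * q - 1) * fstarN2N1 u).
Proof.
move=> u01; rewrite fstarN2N1_sqrt //.
have st1 := sqr_sqrt_add_sqr_sqrt_subr u01; case/andP: u01 => u_ge0 u_le1.
set s := Num.sqrt u in st1 *; set t := Num.sqrt (1 - u) in st1 *.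
have s2 : s ^+ 2 = u by rewrite sqr_sqrtr.
have t2 : t ^+ 2 = 1 - u by rewrite sqr_sqrtr // subr_ge0.
have s_ge0 : 0 <= s := sqrtr_ge0 u.
have t_ge0 : 0 <= t := sqrtr_ge0 (1 - u).
have [s_le_t|t_lt_s] := leP s t.
  have := sqr_le_fstar_sqrt s_ge0 s_le_t st1.
  by rewrite s2; apply: le_trans; rewrite ge_min lexx orbT.
have := sqr_le_fstar_sqrt t_ge0 (ltW t_lt_s) (etrans (addrC _ _) st1).
by rewrite t2 -fstar_sqrtC; apply: le_trans; rewrite ge_min lexx.
Qed.

Lemma measurable_fstar_sqrt_sqrt :
  measurable_fun setT (fun u : R => fstar_sqrt (Num.sqrt u) (Num.sqrt (1 - u))).
Proof.
have msqrt : measurable_fun setT (@Num.sqrt R).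
  exact: continuous_measurable_fun (@sqrt_continuous R).
have mw : measurable_fun setT (fun u : R => Num.sqrt u + Num.sqrt (1 - u)).
  apply: measurable_funD => //.
  by apply: measurableT_comp => //; exact: measurable_funB.
by apply: measurable_funB; apply: measurable_funM => //; exact: measurable_funX.
Qed.

End fstar_sqrt.

Lemma bounded_fun_normr_le {T : Type} {R : realType} (f : T -> R) (M : R) :
  (forall x, `|f x| <= M) -> [bounded f x | x in setT].
Proof.
move=> fM; rewrite /bounded_near; near=> N => x _ /=.
move: (fM x) => /le_trans; apply; near: N; exact/nbhs_pinfty_ge/num_real.
Unshelve. all: end_near.
Qed.

Section weighted_integral.
Context {d : measure_display} {X : measurableType d} {R : realType}.
Context {mu : {measure set X -> \bar R}} {p : X -> R}.
Hypothesis p_ge0 : forall x, 0 <= p x.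
Hypothesis p_int : mu.-integrable setT (EFin \o p).

Lemma integrable_bounded_mulr (f : X -> R) :
  measurable_fun setT f -> [bounded f x | x in setT] ->
  mu.-integrable setT (EFin \o (fun x => f x * p x)).
Proof.
by move=> mf bf; exact: eq_integrable (integrableMr measurableT mf bf p_int).
Qed.

Lemma le_Rintegral_affine (f g : X -> R) (a b : R) :
  measurable_fun setT f -> [bounded f x | x in setT] ->
  measurable_fun setT g -> [bounded g x | x in setT] ->
  (forall x, f x <= a + b * g x) ->
  \int[mu]_(x in setT) (f x * p x) <=
    a * \int[mu]_(x in setT) p x + b * \int[mu]_(x in setT) (g x * p x).
Proof.
move=> mf bf mg bg fg.
have gp_int := integrable_bounded_mulr _ mg bg.
have ap_int : mu.-integrable setT (EFin \o (fun x => a * p x)).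
  exact: (integrableZl measurableT a p_int).
have bgp_int : mu.-integrable setT (EFin \o (fun x => b * (g x * p x))).
  exact: (integrableZl measurableT b gp_int).
rewrite -!RintegralZl // -RintegralD //.
apply: le_Rintegral => //; first exact: integrable_bounded_mulr.
  exact: (integrableD measurableT ap_int bgp_int).
by move=> x _; rewrite mulrA -mulrDl ler_wpM2r.
Qed.

End weighted_integral.

Theorem mainTheorem10 (d : measure_display) (X : measurableType d)
  (R : realType) (mu : {measure set X -> \bar R}) (p P1 P2 : X -> R)
  (p_mes : measurable_fun setT p) (p_ge0 : forall x, 0 <= p x)
  (p_int : (\int[mu]_x (p x)%:E = 1)%E)
  (P1_mes : measurable_fun setT P1) (P2_mes : measurable_fun setT P2)
  (P1_ge0 : forall x, 0 <= P1 x) (P2_ge0 : forall x, 0 <= P2 x)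
  (P12 : forall x, P1 x + P2 x = 1) :
  let Pe := Rintegral mu setT (fun x => Num.min (P1 x) (P2 x) * p x) in
  let Mbar := Rintegral mu setT (fun x => fstarN2N1 (P2 x) * p x) in
  Pe <= 1 / 2 * (1 - 4 / (2 * Num.sqrt 2 - 1) * Mbar).
Proof.
cbv zeta.
have P2_01 x : 0 <= P2 x <= 1 by rewrite P2_ge0 /= -(P12 x) lerDr.
have P1E x : P1 x = 1 - P2 x by rewrite -(P12 x) addrK.
pose g x := fstar_sqrt (Num.sqrt (P2 x)) (Num.sqrt (1 - P2 x)).
have -> : \int[mu]_(x in setT) (fstarN2N1 (P2 x) * p x) =
          \int[mu]_(x in setT) (g x * p x).
  by apply: eq_Rintegral => x _; rewrite fstarN2N1_sqrt ?P2_01.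
have p_intg : mu.-integrable setT (EFin \o p).
  apply/integrableP; split; first exact/measurable_EFinP.
  by under eq_integral do rewrite /= ger0_norm //; rewrite p_int ltry.
have p1 : \int[mu]_(x in setT) p x = 1 by rewrite /Rintegral p_int.
have bmin : [bounded Num.min (P1 x) (P2 x) | x in setT].
  apply: (bounded_fun_normr_le _ 1) => x.
  rewrite ger0_norm ?le_min ?P1_ge0 ?P2_ge0 // ge_min.
  by case/andP: (P2_01 x) => _ ->; rewrite orbT.
have bg : [bounded g x | x in setT].
  apply: (bounded_fun_normr_le _ 1) => x.
  by apply: normr_fstar_sqrt_le1; rewrite ?sqrtr_ge0 ?sqr_sqrt_add_sqr_sqrt_subr.
set c := 4 / (2 * Num.sqrt 2 - 1).
apply: le_trans (le_Rintegral_affine p_ge0 p_intg _ g (1 / 2) (- (1 / 2 * c))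
  (measurable_minr P1_mes P2_mes) bmin
  (measurableT_comp measurable_fstar_sqrt_sqrt P2_mes) bg _) _.
- move=> x /=; rewrite /g -fstarN2N1_sqrt // P1E.
  by have := minr_le_fstarN2N1_bound (P2_01 x); rewrite -/c; lra.
- by rewrite p1; lra.
Qed.
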